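(* Let $K=\langle a,b,s\mid sas^{-1}=ab,\ sbs^{-1}=b\rangle$ and $L=\langle c,q\mid c(qcq^{-1})=(qcq^{-1})c\rangle$ (these groups are isomorphic via $a\mapsto cq^{-1}$, $b\mapsto qcq^{-1}c^{-1}$, $s\mapsto c$). For $i\in\mathbb{Z}$ let $c_i=q^icq^{-i}\in L$. Then: (1) $C_L(c_i)=\langle c_{i-1},c_i,c_{i+1}\rangle$ for every $i\in\mathbb{Z}$; (2) $C_K(s)=\langle aba^{-1},b,s\rangle$.
   Context: $C_G(g)$ denotes the centraliser of $g$ in $G$. *)

From Stdlib Require Import ZArith.
Set Implicit Arguments.

Record Grp := {
  gcar :> Type;
  gmul : gcar -> gcar -> gcar;
  gone : gcar;
  ginv : gcar -> gcar;
  gmulA : forall x y z, gmul x (gmul y z) = gmul (gmul x y) z;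
  gmul1 : forall x, gmul gone x = x;
  gmulV : forall x, gmul (ginv x) x = gone
}.

Arguments gmul {g} _ _.
Arguments gone {g}.
Arguments ginv {g} _.

Definition gconj {G : Grp} (y x : G) : G := gmul (gmul y x) (ginv y).

Fixpoint gpown {G : Grp} (x : G) (n : nat) : G :=
  match n with O => gone | S n => gmul x (gpown x n) end.

Definition gpowz {G : Grp} (x : G) (z : Z) : G :=
  match z with
  | Z0 => gone
  | Zpos p => gpown x (Pos.to_nat p)
  | Zneg p => ginv (gpown x (Pos.to_nat p))
  end.

Definition is_hom {G H : Grp} (f : G -> H) : Prop :=
  forall x y, f (gmul x y) = gmul (f x) (f y).

Definition centraliser {G : Grp} (g : G) : G -> Prop :=
  fun x => gmul x g = gmul g x.

Inductive gen {G : Grp} (S : G -> Prop) : G -> Prop :=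
  | gen_in : forall x, S x -> gen S x
  | gen_one : gen S gone
  | gen_mul : forall x y, gen S x -> gen S y -> gen S (gmul x y)
  | gen_inv : forall x, gen S x -> gen S (ginv x).

Definition rel_L {G : Grp} (c q : G) : Prop :=
  gmul c (gconj q c) = gmul (gconj q c) c.

(* (G, c, q) is the group presented by <c, q | rel_L>: the relations hold
   and it has the universal property of the presentation. *)
Definition is_pres_L (G : Grp) (c q : G) : Prop :=
  rel_L c q /\
  forall (H : Grp) (c' q' : H), rel_L c' q' ->
    exists f : G -> H, (is_hom f /\ f c = c' /\ f q = q') /\
      forall g : G -> H, is_hom g -> g c = c' -> g q = q' ->
        forall x, g x = f x.

Definition rel_K {G : Grp} (a b s : G) : Prop :=
  gconj s a = gmul a b /\ gconj s b = b.

Definition is_pres_K (G : Grp) (a b s : G) : Prop :=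
  rel_K a b s /\
  forall (H : Grp) (a' b' s' : H), rel_K a' b' s' ->
    exists f : G -> H, (is_hom f /\ f a = a' /\ f b = b' /\ f s = s') /\
      forall g : G -> H, is_hom g -> g a = a' -> g b = b' -> g s = s' ->
        forall x, g x = f x.

Definition cL {G : Grp} (c q : G) (i : Z) : G := gconj (gpowz q i) c.

(* K is the semidirect product F(a, b) x| <s>, with s acting by the
   automorphism phi : a |-> a b, b |-> b.  Concretely, K acts on reduced words
   in a, b (a and b by left multiplication, s by phi); every element of K is
   w s^n, and the image of the empty word shows that w s^n commutes with s only
   if phi w = w.  Since phi inserts letters b^{+-1} without ever cancelling an
   a^{+-1}, an induction on the first letter of a reduced word shows that the
   fixed points of phi are exactly <a b a^-1, b>.  Part (1) is part (2)
   transported along c |-> s, q |-> a^-1 s (a homomorphism from L to the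
   permutation model suffices), and conjugation by q^i moves c_j to c_{i+j}. *)

From Stdlib Require Import ZArith List Lia ProofIrrelevance FunctionalExtensionality.
Import ListNotations.

Arguments gmulA {g} _ _ _.
Arguments gmul1 {g} _.
Arguments gmulV {g} _.

Section GroupLemmas.
Context {G : Grp}.
Implicit Types g x y z : G.

Lemma gmulrV x : gmul x (ginv x) = gone.
Proof.
  rewrite <- (gmul1 (gmul x (ginv x))), <- (gmulV (ginv x)) at 1.
  rewrite <- gmulA, (gmulA (ginv x) x), gmulV, gmul1. apply gmulV.
Qed.

Lemma gmulr1 x : gmul x gone = x.
Proof. rewrite <- (gmulV x), gmulA, gmulrV, gmul1. reflexivity. Qed.

Lemma ginv_unique x y : gmul x y = gone -> x = ginv y.
Proof. intro H. rewrite <- (gmulr1 x), <- (gmulrV y), gmulA, H, gmul1. reflexivity. Qed.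

Lemma ginvK x : ginv (ginv x) = x.
Proof. symmetry. apply ginv_unique, gmulrV. Qed.

Lemma ginvM x y : ginv (gmul x y) = gmul (ginv y) (ginv x).
Proof.
  symmetry. apply ginv_unique.
  rewrite <- gmulA, (gmulA (ginv x)), gmulV, gmul1, gmulV. reflexivity.
Qed.

Lemma ginv1 : ginv (@gone G) = gone.
Proof. symmetry. apply ginv_unique, gmul1. Qed.

Lemma gmulKV x y : gmul (gmul x y) (ginv y) = x.
Proof. rewrite <- gmulA, gmulrV, gmulr1. reflexivity. Qed.

Lemma gmulVK x y : gmul (gmul x (ginv y)) y = x.
Proof. rewrite <- gmulA, gmulV, gmulr1. reflexivity. Qed.

Lemma gmulI z x y : gmul z x = gmul z y -> x = y.
Proof.
  intro H. rewrite <- (gmul1 x), <- (gmulV z), <- gmulA, H, gmulA, gmulV, gmul1.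
  reflexivity.
Qed.
End GroupLemmas.

Ltac gsimpl := unfold gconj; repeat progress
  (rewrite ?ginvM, ?ginvK, ?ginv1, ?gmulA, ?gmul1, ?gmulr1, ?gmulKV, ?gmulVK,
           ?gmulV, ?gmulrV).

Section Conjugation.
Context {G : Grp}.
Implicit Types g x y : G.

Lemma gconjM g x y : gconj g (gmul x y) = gmul (gconj g x) (gconj g y).
Proof. gsimpl. reflexivity. Qed.

Lemma gconjV g x : gconj g (ginv x) = ginv (gconj g x).
Proof. gsimpl. reflexivity. Qed.

Lemma gconj1 g : gconj g gone = gone.
Proof. gsimpl. reflexivity. Qed.

Lemma gconjJ g x y : gconj g (gconj x y) = gconj (gconj g x) (gconj g y).
Proof. gsimpl. reflexivity. Qed.

Lemma gconj_fixed_commute g y : gconj g y = y -> gmul y g = gmul g y.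
Proof. intro H. rewrite <- H at 1. gsimpl. reflexivity. Qed.

Lemma gcommute_conj_fixed g y : gmul g y = gmul y g -> gconj g y = y.
Proof. intro H. unfold gconj. rewrite H. gsimpl. reflexivity. Qed.

Lemma gconj_commute g x y : gmul x y = gmul y x ->
  gmul (gconj g x) (gconj g y) = gmul (gconj g y) (gconj g x).
Proof. intro H. rewrite <- !gconjM, H. reflexivity. Qed.

Lemma centraliser_gconj g x y : centraliser (gconj g y) x ->
  centraliser y (gconj (ginv g) x).
Proof.
  unfold centraliser. intro H.
  transitivity (gmul (gmul (ginv g) (gmul x (gconj g y))) g). { gsimpl. reflexivity. }
  rewrite H. gsimpl. reflexivity.
Qed.
End Conjugation.

Section Powers.
Context {G : Grp}.
Implicit Types x : G.

Lemma gpownSr x k : gpown x (S k) = gmul (gpown x k) x.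
Proof.
  induction k; simpl. { rewrite gmulr1, gmul1. reflexivity. }
  simpl in IHk. rewrite IHk, gmulA, IHk. reflexivity.
Qed.

Lemma gpowz_nat x k : gpowz x (Z.of_nat k) = gpown x k.
Proof. destruct k; simpl; auto. rewrite SuccNat2Pos.id_succ. reflexivity. Qed.

Lemma gpowz_oppnat x k : gpowz x (- Z.of_nat k) = ginv (gpown x k).
Proof.
  destruct k; simpl. { rewrite ginv1. reflexivity. }
  rewrite SuccNat2Pos.id_succ. reflexivity.
Qed.

Lemma gpowzS x n : gpowz x (n + 1) = gmul x (gpowz x n).
Proof.
  destruct (Z_le_gt_dec 0 n).
  - replace n with (Z.of_nat (Z.to_nat n)) by lia.
    replace (Z.of_nat (Z.to_nat n) + 1)%Z with (Z.of_nat (S (Z.to_nat n))) by lia.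
    rewrite !gpowz_nat. reflexivity.
  - replace n with (- Z.of_nat (S (Z.to_nat (- n - 1))))%Z by lia.
    replace (- Z.of_nat (S (Z.to_nat (- n - 1))) + 1)%Z
      with (- Z.of_nat (Z.to_nat (- n - 1)))%Z by lia.
    rewrite !gpowz_oppnat, gpownSr. gsimpl. reflexivity.
Qed.

Lemma gpowzP x n : gpowz x (n - 1) = gmul (ginv x) (gpowz x n).
Proof. rewrite <- (Z.sub_add 1 n) at 2. rewrite gpowzS. gsimpl. reflexivity. Qed.

Lemma gpowzD x m n : gpowz x (m + n) = gmul (gpowz x m) (gpowz x n).
Proof.
  induction m using Z.peano_ind.
  - simpl. rewrite gmul1. reflexivity.
  - replace (Z.succ m + n)%Z with (m + n + 1)%Z by lia. unfold Z.succ.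
    rewrite !gpowzS, IHm, gmulA. reflexivity.
  - replace (Z.pred m + n)%Z with (m + n - 1)%Z by lia.
    rewrite <- Z.sub_1_r, !gpowzP, IHm, gmulA. reflexivity.
Qed.
End Powers.

Section Generation.
Context {G : Grp}.
Implicit Types (S T : G -> Prop) (g x : G).

Lemma gen_gpowz S x n : gen S x -> gen S (gpowz x n).
Proof.
  intro H. assert (Hn : forall k, gen S (gpown x k)).
  { induction k; simpl. apply gen_one. apply gen_mul; auto. }
  destruct n; simpl; auto using gen_one, gen_inv.
Qed.

Lemma gen_sub S T x : (forall y, S y -> gen T y) -> gen S x -> gen T x.
Proof. intros H Hx. induction Hx; auto using gen_one, gen_mul, gen_inv. Qed.

Lemma gen_centraliser S g x :
  (forall y, S y -> centraliser g y) -> gen S x -> centraliser g x.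
Proof.
  unfold centraliser. intros H Hx. induction Hx.
  - auto.
  - rewrite gmul1, gmulr1. reflexivity.
  - rewrite <- gmulA, IHHx2, gmulA, IHHx1, <- gmulA. reflexivity.
  - transitivity (gmul (ginv x) (gmul (gmul g x) (ginv x))). { gsimpl. reflexivity. }
    rewrite <- IHHx. gsimpl. reflexivity.
Qed.

Lemma gen_gconj S g y :
  gen S y -> gen (fun z => exists u, S u /\ z = gconj g u) (gconj g y).
Proof.
  intro H. induction H.
  - apply gen_in. eauto.
  - rewrite gconj1. apply gen_one.
  - rewrite gconjM. apply gen_mul; auto.
  - rewrite gconjV. apply gen_inv; auto.
Qed.
End Generation.

Section Homomorphisms.
Context {G H : Grp} (f : G -> H) (Hf : is_hom f).

Lemma hom1 : f gone = gone.
Proof. apply (gmulI (f gone)). rewrite <- Hf, gmul1, gmulr1. reflexivity. Qed.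

Lemma homV x : f (ginv x) = ginv (f x).
Proof. apply ginv_unique. rewrite <- Hf, gmulV. apply hom1. Qed.

Lemma hom_gpowz x n : f (gpowz x n) = gpowz (f x) n.
Proof.
  assert (Hn : forall k, f (gpown x k) = gpown (f x) k).
  { induction k; simpl. apply hom1. rewrite Hf, IHk. reflexivity. }
  destruct n; simpl; auto using hom1. rewrite homV, Hn. reflexivity.
Qed.

Lemma hom_gconj g x : f (gconj g x) = gconj (f g) (f x).
Proof. unfold gconj. rewrite !Hf, homV. reflexivity. Qed.
End Homomorphisms.

(** * Reduced words in the free group on a, b *)

Inductive letter := La | LaV | Lb | LbV.

Definition letter_inv (x : letter) : letter :=
  match x with La => LaV | LaV => La | Lb => LbV | LbV => Lb end.

Definition letter_eqb (x y : letter) : bool :=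
  match x, y with La, La | LaV, LaV | Lb, Lb | LbV, LbV => true | _, _ => false end.

Lemma letter_invK x : letter_inv (letter_inv x) = x.
Proof. destruct x; reflexivity. Qed.

Lemma letter_eqb_eq x y : letter_eqb x y = true -> x = y.
Proof. destruct x, y; simpl; congruence. Qed.

Definition lmul (x : letter) (w : list letter) : list letter :=
  match w with
  | y :: w' => if letter_eqb (letter_inv x) y then w' else x :: w
  | [] => [x]
  end.

Fixpoint reduced (w : list letter) : bool :=
  match w with
  | x :: ((y :: _) as w') => negb (letter_eqb (letter_inv x) y) && reduced w'
  | _ => true
  end.

Definition wmul (u v : list letter) : list letter := fold_right lmul v u.

Lemma reduced_tail x w : reduced (x :: w) = true -> reduced w = true.
Proof. destruct w; simpl; auto. intro H. apply andb_prop in H. tauto. Qed.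

Lemma lmul_reduced x w : reduced w = true -> reduced (lmul x w) = true.
Proof.
  destruct w as [|y w]; simpl; auto. intro H.
  destruct (letter_eqb (letter_inv x) y) eqn:E.
  - exact (reduced_tail y w H).
  - simpl. rewrite E. exact H.
Qed.

Lemma lmul_reduced_cons x w : reduced (x :: w) = true -> lmul x w = x :: w.
Proof.
  destruct w as [|y w]; simpl; auto. intro H. apply andb_prop in H as [H _].
  destruct (letter_eqb (letter_inv x) y); simpl in *; congruence.
Qed.

Lemma lmulK x v : reduced v = true -> lmul x (lmul (letter_inv x) v) = v.
Proof.
  destruct v as [|y v]; [destruct x; reflexivity|]. intro H. simpl. rewrite letter_invK.
  destruct (letter_eqb x y) eqn:E.
  - apply letter_eqb_eq in E as <-. apply lmul_reduced_cons, H.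
  - simpl. destruct x; reflexivity.
Qed.

Lemma lmulVK x v : reduced v = true -> lmul (letter_inv x) (lmul x v) = v.
Proof. intro H. rewrite <- (letter_invK x) at 2. apply lmulK, H. Qed.

Lemma lmul_eq_inv x u v : reduced u = true -> lmul x u = v -> u = lmul (letter_inv x) v.
Proof. intros Hu <-. symmetry. apply lmulVK, Hu. Qed.

Lemma wmul_reduced u v : reduced v = true -> reduced (wmul u v) = true.
Proof. induction u; simpl; auto using lmul_reduced. Qed.

Lemma wmul_lmul x u v : reduced v = true -> wmul (lmul x u) v = lmul x (wmul u v).
Proof.
  intro Hv. destruct u as [|y u]; simpl; auto.
  destruct (letter_eqb (letter_inv x) y) eqn:E; simpl; auto.
  apply letter_eqb_eq in E as <-. rewrite lmulK; auto using wmul_reduced.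
Qed.

Lemma wmulA u v w : reduced w = true -> wmul (wmul u v) w = wmul u (wmul v w).
Proof. intro Hw. induction u; simpl; auto. rewrite wmul_lmul, IHu; auto. Qed.

Lemma wmulw0 w : reduced w = true -> wmul w [] = w.
Proof.
  induction w; simpl; auto. intro H.
  rewrite IHw by exact (reduced_tail _ _ H). apply lmul_reduced_cons, H.
Qed.

Section Substitution.
Variable img : letter -> list letter.
Hypothesis img_inv : forall x, wmul (img x) (img (letter_inv x)) = [].

Fixpoint subst_word (w : list letter) : list letter :=
  match w with [] => [] | x :: w' => wmul (img x) (subst_word w') end.

Lemma subst_word_reduced w : reduced (subst_word w) = true.
Proof. induction w; simpl; auto using wmul_reduced. Qed.

Lemma subst_word_lmul y v : subst_word (lmul y v) = wmul (img y) (subst_word v).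
Proof.
  destruct v as [|z v]; simpl; auto.
  destruct (letter_eqb (letter_inv y) z) eqn:E; simpl; auto.
  apply letter_eqb_eq in E as <-.
  rewrite <- wmulA, img_inv by apply subst_word_reduced. reflexivity.
Qed.

Lemma subst_word_wmul u v : subst_word (wmul u v) = wmul (subst_word u) (subst_word v).
Proof.
  induction u; simpl; auto.
  rewrite subst_word_lmul, IHu, wmulA; auto using subst_word_reduced.
Qed.
End Substitution.

(* The automorphism of the free group given by conjugation by s in K:
   a |-> a b, b |-> b. *)
Definition phi_img (x : letter) : list letter :=
  match x with La => [La; Lb] | LaV => [LbV; LaV] | Lb => [Lb] | LbV => [LbV] end.
Definition phi_inv_img (x : letter) : list letter :=
  match x with La => [La; LbV] | LaV => [Lb; LaV] | Lb => [Lb] | LbV => [LbV] end.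

Definition phi := subst_word phi_img.
Definition phi_inv := subst_word phi_inv_img.

Lemma phi_img_inv x : wmul (phi_img x) (phi_img (letter_inv x)) = [].
Proof. destruct x; reflexivity. Qed.
Lemma phi_inv_img_inv x : wmul (phi_inv_img x) (phi_inv_img (letter_inv x)) = [].
Proof. destruct x; reflexivity. Qed.

Lemma phi_cons x w : phi (x :: w) = wmul (phi_img x) (phi w).
Proof. reflexivity. Qed.

Lemma phi_lmul x w : phi (lmul x w) = wmul (phi_img x) (phi w).
Proof. apply subst_word_lmul, phi_img_inv. Qed.

Lemma phiK w : reduced w = true -> phi (phi_inv w) = w.
Proof.
  induction w as [|x w IH]; simpl; auto. intro H. unfold phi, phi_inv in *.
  rewrite (subst_word_wmul _ phi_img_inv), IH by exact (reduced_tail _ _ H).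
  replace (subst_word phi_img (phi_inv_img x)) with [x] by (destruct x; reflexivity).
  apply lmul_reduced_cons, H.
Qed.

Lemma phi_invK w : reduced w = true -> phi_inv (phi w) = w.
Proof.
  induction w as [|x w IH]; simpl; auto. intro H. unfold phi, phi_inv in *.
  rewrite (subst_word_wmul _ phi_inv_img_inv), IH by exact (reduced_tail _ _ H).
  replace (subst_word phi_inv_img (phi_img x)) with [x] by (destruct x; reflexivity).
  apply lmul_reduced_cons, H.
Qed.

Fixpoint b_lead (w : list letter) : Z :=
  match w with Lb :: w' => 1 + b_lead w' | LbV :: w' => -1 + b_lead w' | _ => 0 end%Z.

Fixpoint first_a (w : list letter) : option bool :=
  match w with
  | La :: _ => Some true | LaV :: _ => Some false | _ :: w' => first_a w' | [] => None
  end.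

Definition a_letter (positive : bool) : letter := if positive then La else LaV.

Lemma b_lead_lmul_b v : b_lead (lmul Lb v) = (b_lead v + 1)%Z.
Proof. destruct v as [|[] v]; cbn -[Z.add]; lia. Qed.
Lemma b_lead_lmul_bV v : b_lead (lmul LbV v) = (b_lead v - 1)%Z.
Proof. destruct v as [|[] v]; cbn -[Z.add]; lia. Qed.
Lemma first_a_lmul_b v : first_a (lmul Lb v) = first_a v.
Proof. destruct v as [|[] v]; reflexivity. Qed.
Lemma first_a_lmul_bV v : first_a (lmul LbV v) = first_a v.
Proof. destruct v as [|[] v]; reflexivity. Qed.

Lemma b_lead_cons_b w : reduced (Lb :: w) = true -> (0 < b_lead (Lb :: w))%Z.
Proof.
  induction w as [|[] w IH]; intro H; try (simpl in H; discriminate);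
    try (cbn -[Z.add]; lia).
  change (b_lead (Lb :: Lb :: w)) with (1 + b_lead (Lb :: w))%Z.
  specialize (IH (reduced_tail _ _ H)). lia.
Qed.

Lemma b_lead_cons_bV w : reduced (LbV :: w) = true -> (b_lead (LbV :: w) < 0)%Z.
Proof.
  induction w as [|[] w IH]; intro H; try (simpl in H; discriminate);
    try (cbn -[Z.add]; lia).
  change (b_lead (LbV :: LbV :: w)) with (-1 + b_lead (LbV :: w))%Z.
  specialize (IH (reduced_tail _ _ H)). lia.
Qed.

Lemma reduced_b_lead0_head w pos : reduced w = true -> b_lead w = 0%Z ->
  first_a w = Some pos -> exists w', w = a_letter pos :: w'.
Proof.
  intros H H0 H1. destruct w as [|[] w]; simpl in H1; try discriminate.
  - injection H1 as <-. eauto.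
  - injection H1 as <-. eauto.
  - pose proof (b_lead_cons_b w H). lia.
  - pose proof (b_lead_cons_bV w H). lia.
Qed.

(* phi only ever inserts b^{+-1} letters, and it inserts b^{-1} in front of
   every a^{-1}: this pins down how the beginning of phi w looks. *)
Definition phi_invariant (w : list letter) : Prop :=
  first_a (phi w) = first_a w /\
  b_lead (phi w) = (b_lead w - match first_a w with Some false => 1 | _ => 0 end)%Z.

Lemma phi_cons_a_no_cancel w : reduced (La :: w) = true -> phi_invariant w ->
  lmul La (lmul Lb (phi w)) = La :: lmul Lb (phi w).
Proof.
  intros H [Ha Hb]. destruct (lmul Lb (phi w)) as [|[] u] eqn:Eu; auto. exfalso.
  assert (F1 : first_a w = Some false) by (rewrite <- Ha, <- first_a_lmul_b, Eu; reflexivity).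
  assert (F2 : b_lead w = 0%Z).
  { pose proof (b_lead_lmul_b (phi w)) as E. rewrite Eu, Hb, F1 in E. simpl in E. lia. }
  destruct (reduced_b_lead0_head w false (reduced_tail _ _ H) F2 F1) as [w' ->].
  discriminate.
Qed.

Lemma phi_cons_aV_no_cancel w : reduced (LaV :: w) = true -> phi_invariant w ->
  lmul LaV (phi w) = LaV :: phi w.
Proof.
  intros H [Ha Hb]. destruct (phi w) as [|[] u] eqn:Eu; auto. exfalso.
  assert (F1 : first_a w = Some true) by (rewrite <- Ha; reflexivity).
  assert (F2 : b_lead w = 0%Z) by (rewrite F1 in Hb; simpl in Hb; lia).
  destruct (reduced_b_lead0_head w true (reduced_tail _ _ H) F2 F1) as [w' ->].
  discriminate.
Qed.

Lemma phi_invariant_reduced w : reduced w = true -> phi_invariant w.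
Proof.
  induction w as [|x w IH]; intro H; [split; reflexivity|].
  specialize (IH (reduced_tail _ _ H)). unfold phi_invariant. rewrite phi_cons.
  destruct x; cbn -[Z.add Z.sub].
  - rewrite phi_cons_a_no_cancel by assumption. simpl. split; reflexivity.
  - rewrite phi_cons_aV_no_cancel by assumption. simpl. split; reflexivity.
  - destruct IH as [Ha Hb].
    rewrite first_a_lmul_b, b_lead_lmul_b, Ha, Hb. split; auto.
    destruct (first_a w) as [[]|]; lia.
  - destruct IH as [Ha Hb].
    rewrite first_a_lmul_bV, b_lead_lmul_bV, Ha, Hb. split; auto.
    destruct (first_a w) as [[]|]; lia.
Qed.

Lemma phi_cons_a w : reduced (La :: w) = true -> phi (La :: w) = La :: lmul Lb (phi w).
Proof.
  intro H. apply phi_cons_a_no_cancel; eauto using phi_invariant_reduced, reduced_tail.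
Qed.

Lemma phi_cons_aV w : reduced (LaV :: w) = true -> phi (LaV :: w) = LbV :: LaV :: phi w.
Proof.
  intro H. rewrite phi_cons. simpl.
  rewrite phi_cons_aV_no_cancel; eauto using phi_invariant_reduced, reduced_tail.
Qed.

(** * The centraliser of s in K *)

Section Evaluation.
Context {G : Grp} (a b : G).

Definition eval_letter (x : letter) : G :=
  match x with La => a | LaV => ginv a | Lb => b | LbV => ginv b end.

Fixpoint eval_word (w : list letter) : G :=
  match w with [] => gone | x :: w' => gmul (eval_letter x) (eval_word w') end.

Lemma eval_lmul x w : eval_word (lmul x w) = gmul (eval_letter x) (eval_word w).
Proof.
  destruct w as [|y w]; simpl; auto.
  destruct (letter_eqb (letter_inv x) y) eqn:E; simpl; auto.
  apply letter_eqb_eq in E as <-.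
  rewrite gmulA. destruct x; simpl; gsimpl; reflexivity.
Qed.

Lemma eval_wmul u v : eval_word (wmul u v) = gmul (eval_word u) (eval_word v).
Proof.
  induction u; simpl. { rewrite gmul1. reflexivity. }
  rewrite eval_lmul, IHu, gmulA. reflexivity.
Qed.

(* phi (a w) = a b phi(w), so a w is fixed by phi iff phi w = b^-1 w: the
   two statements are proved together by induction on w. *)
Lemma phi_fixed_gen w : reduced w = true ->
  (phi w = w -> gen (fun y => y = gconj a b \/ y = b) (eval_word w)) /\
  (phi w = lmul LbV w -> gen (fun y => y = gconj a b \/ y = b) (gmul a (eval_word w))).
Proof.
  set (T := fun y => y = gconj a b \/ y = b).
  assert (Hab : gen T (gconj a b)) by (apply gen_in; left; reflexivity).
  assert (Hb : gen T b) by (apply gen_in; right; reflexivity).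
  induction w as [|x w IH]; intro H; [split; [intros _; apply gen_one | discriminate]|].
  pose proof (reduced_tail _ _ H) as Hw. destruct (IH Hw) as [IH1 IH2].
  pose proof (subst_word_reduced phi_img w) as Hphi.
  destruct x.
  - rewrite phi_cons_a by exact H. split; [|discriminate].
    intro E. injection E as E. apply IH2, (lmul_eq_inv Lb); assumption.
  - rewrite phi_cons_aV by exact H. split; [discriminate|].
    intro E. injection E as E. simpl. rewrite gmulA, gmulrV, gmul1. apply IH1, E.
  - rewrite phi_cons. simpl. split; intro E; apply (lmul_eq_inv Lb) in E; auto.
    + apply gen_mul; auto.
    + replace (gmul a (gmul b (eval_word w))) with (gmul (gconj a b) (gmul a (eval_word w)))
        by (gsimpl; reflexivity).
      apply gen_mul; auto.
  - rewrite phi_cons. simpl. split; intro E; apply (lmul_eq_inv LbV) in E; auto.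
    + apply gen_mul; auto using gen_inv.
    + assert (E' : phi w = lmul LbV w) by (rewrite E, (lmul_reduced_cons LbV w H); reflexivity).
      replace (gmul a (gmul (ginv b) (eval_word w)))
        with (gmul (ginv (gconj a b)) (gmul a (eval_word w))) by (gsimpl; reflexivity).
      apply gen_mul; auto using gen_inv.
Qed.
End Evaluation.

(* The permutation model of K: a and b act on reduced words by left
   multiplication, s by phi. *)
Definition rword := {w : list letter | reduced w = true}.

Lemma rword_eq (v1 v2 : rword) : proj1_sig v1 = proj1_sig v2 -> v1 = v2.
Proof. destruct v1, v2; simpl; intros ->. f_equal. apply proof_irrelevance. Qed.

Definition map_rword (f : list letter -> list letter)
  (Hf : forall w, reduced w = true -> reduced (f w) = true) (v : rword) : rword :=
  exist _ (f (proj1_sig v)) (Hf _ (proj2_sig v)).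

Record rperm := RPerm {
  rpfun : rword -> rword;
  rpinv : rword -> rword;
  rpfunK : forall v, rpfun (rpinv v) = v;
  rpinvK : forall v, rpinv (rpfun v) = v
}.

Lemma rperm_eq (p r : rperm) : (forall v, rpfun p v = rpfun r v) -> p = r.
Proof.
  intro H. assert (Hf : rpfun p = rpfun r) by (apply functional_extensionality, H).
  assert (Hi : rpinv p = rpinv r).
  { apply functional_extensionality. intro v.
    rewrite <- (rpfunK r v) at 1. rewrite <- Hf, rpinvK. reflexivity. }
  destruct p, r; simpl in *; subst. f_equal; apply proof_irrelevance.
Qed.

Definition rperm_mul (p r : rperm) : rperm.
Proof.
  refine (RPerm (fun v => rpfun p (rpfun r v)) (fun v => rpinv r (rpinv p v)) _ _);
    intro v; rewrite ?rpfunK, ?rpinvK; reflexivity.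
Defined.

Definition rperm_one : rperm :=
  RPerm (fun v => v) (fun v => v) (fun _ => eq_refl) (fun _ => eq_refl).

Definition rperm_inv (p : rperm) : rperm := RPerm (rpinv p) (rpfun p) (rpinvK p) (rpfunK p).

Definition rperm_grp : Grp.
Proof.
  refine {| gcar := rperm; gmul := rperm_mul; gone := rperm_one; ginv := rperm_inv |};
    intros; apply rperm_eq; intro v; simpl; auto using rpinvK.
Defined.

Definition rperm_lmul (x : letter) : rperm_grp.
Proof.
  refine (RPerm (map_rword (lmul x) (lmul_reduced x))
                (map_rword (lmul (letter_inv x)) (lmul_reduced (letter_inv x))) _ _);
    intro v; apply rword_eq; simpl; [apply lmulK | apply lmulVK]; apply proj2_sig.
Defined.

Definition rperm_phi : rperm_grp.
Proof.
  refine (RPerm (map_rword phi (fun w _ => subst_word_reduced phi_img w))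
                (map_rword phi_inv (fun w _ => subst_word_reduced phi_inv_img w)) _ _);
    intro v; apply rword_eq; simpl; [apply phiK | apply phi_invK]; apply proj2_sig.
Defined.

Lemma rperm_rel_K : rel_K (rperm_lmul La) (rperm_lmul Lb) rperm_phi.
Proof.
  split; apply rperm_eq; intro v; apply rword_eq; simpl;
    rewrite phi_lmul, phiK by apply proj2_sig; reflexivity.
Qed.

Section CentraliserOfS.
Context {G : Grp} (a b s : G) (Hrel : rel_K a b s).

Definition cent_s_gens : G -> Prop := fun y => y = gconj a b \/ y = b \/ y = s.

Lemma cent_s_gens_centralise y : cent_s_gens y -> centraliser s y.
Proof.
  destruct Hrel as [Ha Hb]. unfold centraliser.
  intros [-> | [-> | ->]]; try reflexivity; apply gconj_fixed_commute; auto.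
  rewrite gconjJ, Ha, Hb. gsimpl. reflexivity.
Qed.

Lemma eval_phi w : eval_word a b (phi w) = gconj s (eval_word a b w).
Proof.
  destruct Hrel as [Ha Hb].
  induction w as [|x w IH]; [symmetry; apply gconj1|].
  rewrite phi_cons, eval_wmul, IH. simpl. rewrite gconjM. f_equal.
  destruct x; simpl; rewrite ?gconjV, ?Ha, ?Hb; gsimpl; reflexivity.
Qed.

Lemma eval_phi_inv w : reduced w = true ->
  eval_word a b (phi_inv w) = gconj (ginv s) (eval_word a b w).
Proof. intro H. rewrite <- (phiK w H) at 2. rewrite eval_phi. gsimpl. reflexivity. Qed.

Definition normal_form (x : G) : Prop :=
  exists w n, reduced w = true /\ x = gmul (eval_word a b w) (gpowz s n).

Lemma normal_form_lmul x y : normal_form y -> normal_form (gmul (eval_letter a b x) y).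
Proof.
  intros (w & n & Hw & ->). exists (lmul x w), n. split; [apply lmul_reduced, Hw|].
  rewrite eval_lmul, gmulA. reflexivity.
Qed.

Lemma normal_form_mul_s y : normal_form y -> normal_form (gmul s y).
Proof.
  intros (w & n & Hw & ->). exists (phi w), (n + 1)%Z. split; [apply subst_word_reduced|].
  rewrite eval_phi, gpowzS. gsimpl. reflexivity.
Qed.

Lemma normal_form_mul_sV y : normal_form y -> normal_form (gmul (ginv s) y).
Proof.
  intros (w & n & Hw & ->). exists (phi_inv w), (n - 1)%Z. split; [apply subst_word_reduced|].
  rewrite eval_phi_inv, gpowzP by exact Hw. gsimpl. reflexivity.
Qed.

Lemma gen_normal_form x : gen (fun y => y = a \/ y = b \/ y = s) x -> normal_form x.
Proof.
  intro Hx.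
  assert (Hmul : forall y, normal_form y ->
            normal_form (gmul x y) /\ normal_form (gmul (ginv x) y)).
  { induction Hx as [x Hx| |x z _ IHx _ IHz|x _ IHx]; intros y Hy.
    - destruct Hx as [-> | [-> | ->]]; split;
        auto using normal_form_mul_s, normal_form_mul_sV;
        [apply (normal_form_lmul La) | apply (normal_form_lmul LaV)
        | apply (normal_form_lmul Lb) | apply (normal_form_lmul LbV)]; exact Hy.
    - rewrite ginv1, gmul1. auto.
    - rewrite ginvM, <- !gmulA. split; [apply IHx, IHz | apply IHz, IHx]; exact Hy.
    - rewrite ginvK. split; apply IHx; exact Hy. }
  rewrite <- (gmulr1 x). apply Hmul.
  exists [], 0%Z. split; [reflexivity|]. simpl. gsimpl. reflexivity.
Qed.

Section ToModel.
Variables (f : G -> rperm_grp) (Hf : is_hom f).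
Hypotheses (fa : f a = rperm_lmul La) (fb : f b = rperm_lmul Lb) (fs : f s = rperm_phi).

Lemma model_eval_word w v : proj1_sig (rpfun (f (eval_word a b w)) v) = wmul w (proj1_sig v).
Proof.
  induction w as [|x w IH]; simpl.
  - rewrite (hom1 f Hf). reflexivity.
  - rewrite Hf. simpl. rewrite <- IH.
    destruct x; simpl; rewrite ?(homV f Hf), ?fa, ?fb; reflexivity.
Qed.

Lemma model_phi_gpowz_nil n v : proj1_sig v = [] -> proj1_sig (rpfun (gpowz rperm_phi n) v) = [].
Proof.
  assert (Hk : forall k v, proj1_sig v = [] ->
            proj1_sig (rpfun (gpown rperm_phi k) v) = [] /\
            proj1_sig (rpinv (gpown rperm_phi k) v) = []).
  { induction k; intros u Hu; simpl; auto.
    destruct (IHk u Hu) as [E1 E2]. split.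
    - simpl. rewrite E1. reflexivity.
    - apply IHk. simpl. rewrite Hu. reflexivity. }
  intro Hv. destruct n; simpl; auto; apply Hk, Hv.
Qed.

(* Evaluating at the empty word reads off the a,b-part w of x = w s^n; then
   x s = s x forces phi w = w. *)
Theorem centraliser_s_gen x :
  gen (fun y => y = a \/ y = b \/ y = s) x -> centraliser s x -> gen cent_s_gens x.
Proof.
  intros Hx Hc. destruct (gen_normal_form x Hx) as (w & n & Hw & Ex).
  pose (nil_rword := exist (fun w => reduced w = true) [] eq_refl : rword).
  assert (Hread : forall v, proj1_sig v = [] -> proj1_sig (rpfun (f x) v) = w).
  { intros v Hv. rewrite Ex, Hf. simpl.
    rewrite model_eval_word, (hom_gpowz f Hf), fs, model_phi_gpowz_nil by exact Hv.
    apply wmulw0, Hw. }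
  assert (Hfix : phi w = w).
  { pose proof (f_equal (fun g => proj1_sig (rpfun (f g) nil_rword)) Hc) as E. simpl in E.
    rewrite !Hf, fs in E. simpl in E. rewrite !Hread in E by reflexivity. symmetry. exact E. }
  rewrite Ex. apply gen_mul.
  - apply (gen_sub (fun y => y = gconj a b \/ y = b)).
    + intros y Hy. apply gen_in. unfold cent_s_gens. tauto.
    + apply phi_fixed_gen; assumption.
  - apply gen_gpowz, gen_in. unfold cent_s_gens. auto.
Qed.
End ToModel.

(* Under a |-> c q^-1, s |-> c, the generator q corresponds to a^-1 s. *)
Lemma rel_K_rel_L : rel_L s (gmul (ginv a) s).
Proof.
  destruct Hrel as [Ha Hb]. unfold rel_L.
  assert (Hq : gconj (gmul (ginv a) s) s = gmul b s).
  { transitivity (gmul (ginv a) (gmul (gconj s a) s)). { gsimpl. reflexivity. }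
    rewrite Ha. gsimpl. reflexivity. }
  rewrite Hq, gmulA, <- (gconj_fixed_commute _ _ Hb). reflexivity.
Qed.
End CentraliserOfS.

(** * Presentations and the group L *)

Section GeneratedSubgroup.
Context {G : Grp} (S : G -> Prop).

Lemma sub_eq (x y : {x : G | gen S x}) : proj1_sig x = proj1_sig y -> x = y.
Proof. destruct x, y; simpl; intros ->. f_equal. apply proof_irrelevance. Qed.

Definition gen_grp : Grp.
Proof.
  refine {| gcar := {x : G | gen S x};
            gmul := fun x y => exist _ (gmul (proj1_sig x) (proj1_sig y))
                                      (gen_mul (proj2_sig x) (proj2_sig y));
            gone := exist _ gone (gen_one S);
            ginv := fun x => exist _ (ginv (proj1_sig x)) (gen_inv (proj2_sig x)) |};
    intros; apply sub_eq; simpl; [apply gmulA | apply gmul1 | apply gmulV].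
Defined.

Definition gen_elt (x : G) (Hx : S x) : gen_grp := exist _ x (gen_in S x Hx).
End GeneratedSubgroup.

(* By the uniqueness part of the universal property, the map into the
   subgroup generated by the generators, followed by the inclusion, is the
   identity. *)
Lemma pres_L_gen (L : Grp) (c q : L) :
  is_pres_L L c q -> forall x, gen (fun y => y = c \/ y = q) x.
Proof.
  intros [Hr Hu] x. set (S := fun y : L => y = c \/ y = q).
  assert (Hrs : rel_L (gen_elt S c (or_introl eq_refl)) (gen_elt S q (or_intror eq_refl)))
    by (apply sub_eq; exact Hr).
  destruct (Hu _ _ _ Hrs) as [fs [[Hfs [fc fq]] _]].
  destruct (Hu L c q Hr) as [f0 [_ Huniq]].
  assert (Hval : forall x, proj1_sig (fs x) = f0 x).
  { apply (Huniq (fun y => proj1_sig (fs y))); cbv beta;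
      [intros u v; rewrite Hfs | rewrite fc | rewrite fq]; reflexivity. }
  assert (Hid : forall x, x = f0 x) by (apply (Huniq (fun y => y)); [intros u v|..]; reflexivity).
  rewrite Hid, <- Hval. apply proj2_sig.
Qed.

Lemma pres_K_gen (K : Grp) (a b s : K) :
  is_pres_K K a b s -> forall x, gen (fun y => y = a \/ y = b \/ y = s) x.
Proof.
  intros [Hr Hu] x. set (S := fun y : K => y = a \/ y = b \/ y = s).
  assert (Hrs : rel_K (gen_elt S a (or_introl eq_refl))
                      (gen_elt S b (or_intror (or_introl eq_refl)))
                      (gen_elt S s (or_intror (or_intror eq_refl)))).
  { destruct Hr as [Ha Hb]. split; apply sub_eq; assumption. }
  destruct (Hu _ _ _ _ Hrs) as [fs [[Hfs [fa [fb fs']]] _]].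
  destruct (Hu K a b s Hr) as [f0 [_ Huniq]].
  assert (Hval : forall x, proj1_sig (fs x) = f0 x).
  { apply (Huniq (fun y => proj1_sig (fs y))); cbv beta;
      [intros u v; rewrite Hfs | rewrite fa | rewrite fb | rewrite fs']; reflexivity. }
  assert (Hid : forall x, x = f0 x) by (apply (Huniq (fun y => y)); [intros u v|..]; reflexivity).
  rewrite Hid, <- Hval. apply proj2_sig.
Qed.

Theorem centraliser_s_K (K : Grp) (a b s : K) : is_pres_K K a b s ->
  forall x, centraliser s x <-> gen (cent_s_gens a b s) x.
Proof.
  intros HK x. pose proof HK as [Hr Hu]. split.
  - destruct (Hu _ _ _ _ rperm_rel_K) as [f [[Hf [fa [fb fs]]] _]].
    apply (centraliser_s_gen a b s Hr f Hf fa fb fs), pres_K_gen, HK.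
  - apply gen_centraliser, cent_s_gens_centralise, Hr.
Qed.

Section CentraliserInL.
Context {L : Grp} (c q : L).

Lemma cL0 : cL c q 0 = c.
Proof. unfold cL. simpl. gsimpl. reflexivity. Qed.

Lemma cL1 : cL c q 1 = gconj q c.
Proof. unfold cL. simpl. gsimpl. reflexivity. Qed.

Lemma gconj_cL i j : gconj (gpowz q i) (cL c q j) = cL c q (i + j).
Proof. unfold cL. rewrite gpowzD. gsimpl. reflexivity. Qed.

Lemma rel_L_commute_cL : rel_L c q ->
  forall i, gmul (cL c q i) (cL c q (i + 1)) = gmul (cL c q (i + 1)) (cL c q i).
Proof.
  intros Hr i.
  replace (cL c q i) with (gconj (gpowz q i) (cL c q 0))
    by (rewrite gconj_cL, Z.add_0_r; reflexivity).
  rewrite <- gconj_cL.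
  apply gconj_commute. rewrite cL0, cL1. exact Hr.
Qed.

Lemma rel_L_rel_K : rel_L c q ->
  rel_K (gmul c (ginv q)) (gmul (gconj q c) (ginv c)) c.
Proof.
  intro Hr. split.
  - gsimpl. reflexivity.
  - rewrite gconjM, (gcommute_conj_fixed _ _ Hr). f_equal. gsimpl. reflexivity.
Qed.

(* L is K with a = c q^-1, b = c_1 c^-1, s = c, and aba^-1 = c c c_{-1}^-1 c^-1. *)
Lemma centraliser_c_L : is_pres_L L c q ->
  forall y, centraliser c y ->
  gen (fun z => z = cL c q (-1) \/ z = cL c q 0 \/ z = cL c q 1) y.
Proof.
  intros HL y Hc. pose proof HL as [Hr Hu].
  set (a := gmul c (ginv q)). set (b := gmul (gconj q c) (ginv c)).
  set (S := fun z => z = cL c q (-1) \/ z = cL c q 0 \/ z = cL c q 1).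
  pose proof (rel_L_rel_K Hr) as HK.
  destruct (Hu _ _ _ (rel_K_rel_L _ _ _ rperm_rel_K)) as [f [[Hf [fc fq]] _]].
  assert (fa : f a = rperm_lmul La).
  { unfold a. rewrite Hf, (homV f Hf), fc, fq. gsimpl. reflexivity. }
  assert (fb : f b = rperm_lmul Lb).
  { destruct rperm_rel_K as [Ha _].
    unfold b. rewrite Hf, (hom_gconj f Hf), (homV f Hf), fc, fq.
    apply (gmulI (rperm_lmul La)). rewrite <- Ha. gsimpl. reflexivity. }
  assert (Hy : gen (cent_s_gens a b c) y).
  { apply (centraliser_s_gen a b c HK f Hf fa fb fc); auto.
    apply (gen_sub (fun z => z = c \/ z = q)); [|apply pres_L_gen, HL].
    intros z [-> | ->]; [apply gen_in; auto|].
    replace q with (gmul (ginv a) c) by (unfold a; gsimpl; reflexivity).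
    apply gen_mul; [apply gen_inv|]; apply gen_in; auto. }
  assert (Hc0 : gen S c) by (rewrite <- cL0; apply gen_in; unfold S; auto).
  assert (Hc1 : gen S (cL c q 1)) by (apply gen_in; unfold S; auto).
  assert (Hcm : gen S (cL c q (-1))) by (apply gen_in; unfold S; auto).
  apply (gen_sub (cent_s_gens a b c)); [|exact Hy].
  intros z [-> | [-> | ->]]; auto.
  - replace (gconj a b) with (gmul (gmul (gmul c c) (ginv (cL c q (-1)))) (ginv c))
      by (unfold a, b, cL; simpl; gsimpl; reflexivity).
    repeat apply gen_mul; auto using gen_inv.
  - replace b with (gmul (cL c q 1) (ginv c)) by (unfold b, cL; simpl; gsimpl; reflexivity).
    apply gen_mul; auto using gen_inv.
Qed.

Theorem centraliser_cL (i : Z) : is_pres_L L c q ->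
  forall x, centraliser (cL c q i) x <->
    gen (fun y => y = cL c q (i - 1) \/ y = cL c q i \/ y = cL c q (i + 1)) x.
Proof.
  intros HL x. split.
  - intro Hc. rewrite <- (Z.add_0_r i), <- gconj_cL, cL0 in Hc.
    apply centraliser_gconj, (centraliser_c_L HL), (gen_gconj _ (gpowz q i)) in Hc.
    replace x with (gconj (gpowz q i) (gconj (ginv (gpowz q i)) x)) by (gsimpl; reflexivity).
    eapply gen_sub; [|exact Hc].
    intros z (u & Hu & ->). apply gen_in.
    destruct Hu as [-> | [-> | ->]]; rewrite gconj_cL; [left | right; left | right; right];
      f_equal; lia.
  - apply gen_centraliser. intros y [-> | [-> | ->]]; unfold centraliser.
    + pose proof (rel_L_commute_cL (proj1 HL) (i - 1)) as E.
      rewrite Z.sub_add in E. exact E.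
    + reflexivity.
    + symmetry. apply rel_L_commute_cL, (proj1 HL).
Qed.
End CentraliserInL.

Theorem lemma6p2 :
  (forall (L : Grp) (c q : L), is_pres_L L c q ->
     forall i : Z, forall x : L,
       centraliser (cL c q i) x <->
       gen (fun y => y = cL c q (i - 1)%Z \/ y = cL c q i \/ y = cL c q (i + 1)%Z) x)
  /\
  (forall (K : Grp) (a b s : K), is_pres_K K a b s ->
     forall x : K,
       centraliser s x <->
       gen (fun y => y = gconj a b \/ y = b \/ y = s) x).
Proof.
  split.
  - intros L c q HL i. apply centraliser_cL, HL.
  - exact centraliser_s_K.
Qed.
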